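(* Assume (C1) and (C2). For all $u\in\mathcal{D}$ and $t\ge0$, $$I(u)\ge I(tu)+\frac{1-t^q}{q}\langle I'(u),u\rangle+\Big(\frac{1-t^p}{p}-\frac{1-t^q}{q}\Big)\|u\|^p.$$
   Context: Fix real numbers $p,q,r$ with $1<p<q$, $\frac p2$ a positive integer, and $r\ge1$, and functions $a,b,c:\mathbb{Z}\to(0,+\infty)$. Conditions: - (C1) There is $b_0>0$ with $b(n)\ge b_0$ for all $n$ and $b(n)\to+\infty$ as $|n|\to\infty$. - (C2) There is $c_0>0$ with $c(n)\le c_0$ for all $n$ and $\sum_n c(n)<+\infty$. Notation and spaces: - $\Delta u(n)=u(n+1)-u(n)$. - $E$ is the set of real sequences $u$ with $\|u\|:=\big(\sum_n[a(n)|\Delta u(n)|^p+b(n)|u(n)|^p]\big)^{1/p}<\infty$. - $\mathcal{D}=\{u\in E:\sum_n c(n)|u(n)|^q\ln|u(n)|^r<+\infty\}$, where terms with $u(n)=0$ are read as $0$. For $u,v\in\mathcal{D}$: - $I(u)=\frac1p\|u\|^p+\frac{r}{q^2}\sum_n c(n)|u(n)|^q-\frac1q\sum_n c(n)|u(n)|^q\ln|u(n)|^r$. - $\langle I'(u),v\rangle=\sum_n[a(n)|\Delta u(n)|^{p-2}\Delta u(n)\Delta v(n)+b(n)|u(n)|^{p-2}u(n)v(n)]-\sum_n c(n)|u(n)|^{q-2}u(n)v(n)\ln|u(n)|^r$. *)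

From Stdlib Require Import Reals ZArith.
From Coquelicot Require Import Coquelicot.
Open Scope R_scope.

(* x^y for x >= 0 and real y, with the convention 0^y = 0 (y > 0 in all uses;
   where y = p-2 may be 0, the factor is multiplied by the base, which is 0). *)
Definition rpow (x y : R) : R := if Rle_dec x 0 then 0 else Rpower x y.

Definition Zsummable (f : Z -> R) : Prop :=
  ex_series (fun n : nat => Rabs (f (Z.of_nat n))) /\
  ex_series (fun n : nat => Rabs (f (- Z.of_nat (S n))%Z)).

Definition Zsum (f : Z -> R) : R :=
  Series (fun n : nat => f (Z.of_nat n)) +
  Series (fun n : nat => f (- Z.of_nat (S n))%Z).

Definition tends_to_infty_Z (f : Z -> R) : Prop :=
  forall M : R, exists N : nat, forall n : Z, (Z.of_nat N < Z.abs n)%Z -> M < f n.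

Definition Delta (u : Z -> R) (n : Z) : R := u (n + 1)%Z - u n.

Definition norm_term (a b : Z -> R) (p : R) (u : Z -> R) (n : Z) : R :=
  a n * rpow (Rabs (Delta u n)) p + b n * rpow (Rabs (u n)) p.

Definition inE (a b : Z -> R) (p : R) (u : Z -> R) : Prop :=
  Zsummable (norm_term a b p u).

Definition normE (a b : Z -> R) (p : R) (u : Z -> R) : R :=
  rpow (Zsum (norm_term a b p u)) (/ p).

Definition log_term (c : Z -> R) (q r : R) (u : Z -> R) (n : Z) : R :=
  if Req_EM_T (u n) 0 then 0
  else c n * rpow (Rabs (u n)) q * ln (rpow (Rabs (u n)) r).

(* u in D (the series is required to converge absolutely) *)
Definition inD (a b c : Z -> R) (p q r : R) (u : Z -> R) : Prop :=
  inE a b p u /\ Zsummable (log_term c q r u).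

Definition Ifun (a b c : Z -> R) (p q r : R) (u : Z -> R) : R :=
  / p * rpow (normE a b p u) p
  + r / (q ^ 2) * Zsum (fun n => c n * rpow (Rabs (u n)) q)
  - / q * Zsum (log_term c q r u).

Definition dI (a b c : Z -> R) (p q r : R) (u v : Z -> R) : R :=
  Zsum (fun n => a n * (rpow (Rabs (Delta u n)) (p - 2) * Delta u n) * Delta v n
               + b n * (rpow (Rabs (u n)) (p - 2) * u n) * v n)
  - Zsum (fun n => c n * (rpow (Rabs (u n)) (q - 2) * u n) * v n
                   * ln (rpow (Rabs (u n)) r)).

Definition scale (t : R) (u : Z -> R) : Z -> R := fun n => t * u n.

(* Write N = ||u||^p, S = sum c |u|^q and L = sum c |u|^q ln |u|^r.  The three
   terms of I scale as t^p, t^q and t^q (L + r ln t S) along the ray t u, and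
   <I'(u), u> = N - L, so the difference of the two sides of the inequality is
   exactly (r S / q^2) (1 - s + s ln s) with s = t^q, which is nonnegative.
   The only analytic input is that S converges: c |u|^q is bounded by the
   log term where |u|^r >= e and by e^(q/r) c elsewhere. *)
From Pilot Require Import Defs.
From Stdlib Require Import Reals ZArith Lra.
From Coquelicot Require Import Coquelicot.
Open Scope R_scope.

Lemma ex_series_Rabs_le (f g : nat -> R) :
  ex_series g -> (forall n, Rabs (f n) <= g n) -> ex_series (fun n => Rabs (f n)).
Proof.
  intros Hg Hfg.
  apply (ex_series_le (V := R_CompleteNormedModule) _ g); [|exact Hg].
  intros n; change norm with Rabs; simpl.
  rewrite Rabs_Rabsolu; apply Hfg.
Qed.

Lemma Zsummable_le (f g : Z -> R) :
  Zsummable g -> (forall n, Rabs (f n) <= Rabs (g n)) -> Zsummable f.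
Proof.
  intros [Gpos Gneg] Hfg; split.
  - apply (ex_series_Rabs_le _ _ Gpos); intros n; apply Hfg.
  - apply (ex_series_Rabs_le _ _ Gneg); intros n; apply Hfg.
Qed.

Lemma Zsummable_Rabs (f : Z -> R) : Zsummable f -> Zsummable (fun n => Rabs (f n)).
Proof.
  intros Hf; apply (Zsummable_le _ f Hf); intros n; rewrite Rabs_Rabsolu; lra.
Qed.

Lemma Zsummable_plus (f g : Z -> R) :
  Zsummable f -> Zsummable g -> Zsummable (fun n => f n + g n).
Proof.
  intros [Fpos Fneg] [Gpos Gneg]; split.
  - apply (ex_series_Rabs_le _ _ (ex_series_plus (V := R_NormedModule) _ _ Fpos Gpos)).
    intros n; apply Rabs_triang.
  - apply (ex_series_Rabs_le _ _ (ex_series_plus (V := R_NormedModule) _ _ Fneg Gneg)).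
    intros n; apply Rabs_triang.
Qed.

Lemma Zsummable_scal (k : R) (f : Z -> R) : Zsummable f -> Zsummable (fun n => k * f n).
Proof.
  intros [Fpos Fneg]; split.
  - apply (ex_series_Rabs_le _ _ (ex_series_scal_l (V := R_NormedModule) (Rabs k) _ Fpos)).
    intros n; rewrite Rabs_mult; apply Rle_refl.
  - apply (ex_series_Rabs_le _ _ (ex_series_scal_l (V := R_NormedModule) (Rabs k) _ Fneg)).
    intros n; rewrite Rabs_mult; apply Rle_refl.
Qed.

Lemma Zsum_ext (f g : Z -> R) : (forall n, f n = g n) -> Zsum f = Zsum g.
Proof.
  intros Hfg; unfold Zsum.
  rewrite (Series_ext _ _ (fun n => Hfg _)), (Series_ext _ _ (fun n => Hfg _)).
  reflexivity.
Qed.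

Lemma Zsum_scal (k : R) (f : Z -> R) : Zsum (fun n => k * f n) = k * Zsum f.
Proof. unfold Zsum; rewrite !Series_scal_l; ring. Qed.

Lemma Zsum_plus (f g : Z -> R) :
  Zsummable f -> Zsummable g -> Zsum (fun n => f n + g n) = Zsum f + Zsum g.
Proof.
  intros [Fpos Fneg] [Gpos Gneg]; unfold Zsum.
  rewrite Series_plus by (apply ex_series_Rabs; assumption).
  rewrite (Series_plus (fun n => f (- Z.of_nat (S n))%Z))
    by (apply ex_series_Rabs; assumption).
  ring.
Qed.

Lemma Series_ge0 (f : nat -> R) : (forall n, 0 <= f n) -> ex_series f -> 0 <= Series f.
Proof.
  intros Hf Hex.
  apply Rle_trans with (Series (fun n => 0 * f n)); [rewrite Series_scal_l; lra|].
  apply Series_le; [|exact Hex].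
  intros n; rewrite Rmult_0_l; split; [lra | apply Hf].
Qed.

Lemma Zsum_ge0 (f : Z -> R) : (forall n, 0 <= f n) -> Zsummable f -> 0 <= Zsum f.
Proof.
  intros Hf [Fpos Fneg]; unfold Zsum.
  apply Rplus_le_le_0_compat; apply Series_ge0; auto; apply ex_series_Rabs; assumption.
Qed.

Lemma rpow_Rpower (x y : R) : 0 < x -> rpow x y = Rpower x y.
Proof. intros Hx; unfold rpow; destruct (Rle_dec x 0); [lra | reflexivity]. Qed.

Lemma rpow_0l (y : R) : rpow 0 y = 0.
Proof. unfold rpow; destruct (Rle_dec 0 0); lra. Qed.

Lemma rpow_ge0 (x y : R) : 0 <= rpow x y.
Proof.
  unfold rpow; destruct (Rle_dec x 0); [lra | left; apply exp_pos].
Qed.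

Lemma rpow_mult_distr (x y z : R) :
  0 <= x -> 0 <= y -> rpow (x * y) z = rpow x z * rpow y z.
Proof.
  intros Hx Hy; unfold rpow.
  destruct (Rle_dec x 0), (Rle_dec y 0), (Rle_dec (x * y) 0);
    try ring; try (exfalso; nra).
  symmetry; apply Rpower_mult_distr; lra.
Qed.

Lemma rpow_rpow_inv (x p : R) : 0 < p -> 0 <= x -> rpow (rpow x (/ p)) p = x.
Proof.
  intros Hp [Hx | <-]; [|now rewrite !rpow_0l].
  rewrite (rpow_Rpower x), rpow_Rpower by (try apply exp_pos; exact Hx).
  rewrite Rpower_mult, Rinv_l by lra.
  apply Rpower_1, Hx.
Qed.

Lemma rpow_Rabs_minus2 (x y : R) : rpow (Rabs x) (y - 2) * x * x = rpow (Rabs x) y.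
Proof.
  destruct (Req_dec x 0) as [-> | Hx]; [rewrite Rabs_R0, !rpow_0l; ring|].
  assert (Hax : 0 < Rabs x) by (apply Rabs_pos_lt, Hx).
  rewrite !rpow_Rpower by exact Hax.
  replace (Rpower (Rabs x) (y - 2) * x * x) with (Rpower (Rabs x) (y - 2) * Rabs (x * x))
    by (rewrite (Rabs_pos_eq (x * x)) by apply Rle_0_sqr; ring).
  replace y with (y - 2 + 1 + 1) at 2 by ring.
  rewrite !Rpower_plus, Rpower_1, Rabs_mult by exact Hax; ring.
Qed.

Lemma one_sub_exp_add_mul_exp_ge0 (y : R) : 0 <= 1 - exp y + y * exp y.
Proof.
  pose proof (exp_ineq1_le (- y)) as Hlow; pose proof (exp_pos y).
  assert (exp (- y) * exp y = 1) by (rewrite <- exp_plus, Rplus_opp_l; apply exp_0).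
  nra.
Qed.

Lemma one_sub_rpow_add_mul_ln_ge0 (t q : R) :
  0 <= t -> 0 <= 1 - rpow t q + q * rpow t q * ln t.
Proof.
  intros [Ht | <-]; [|rewrite rpow_0l; lra].
  rewrite rpow_Rpower by exact Ht; unfold Rpower.
  replace (q * exp (q * ln t) * ln t) with (q * ln t * exp (q * ln t)) by ring.
  apply one_sub_exp_add_mul_exp_ge0.
Qed.

Definition power_term (c : Z -> R) (q : R) (u : Z -> R) (n : Z) : R :=
  c n * rpow (Rabs (u n)) q.

Section Functional.

Variables (a b c : Z -> R) (p q r : R).
Hypotheses (ha : forall n, 0 <= a n) (hb : forall n, 0 <= b n) (hc : forall n, 0 <= c n).

Lemma norm_term_ge0 (u : Z -> R) (n : Z) : 0 <= norm_term a b p u n.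
Proof.
  unfold norm_term.
  pose proof (ha n); pose proof (hb n).
  pose proof (rpow_ge0 (Rabs (Defs.Delta u n)) p); pose proof (rpow_ge0 (Rabs (u n)) p).
  nra.
Qed.

Lemma power_term_ge0 (u : Z -> R) (n : Z) : 0 <= power_term c q u n.
Proof.
  unfold power_term; pose proof (hc n); pose proof (rpow_ge0 (Rabs (u n)) q); nra.
Qed.

Lemma power_term_le_log_term (u : Z -> R) (n : Z) : 0 < q -> 0 < r ->
  Rabs (power_term c q u n) <= Rabs (log_term c q r u n) + exp (q / r) * c n.
Proof.
  intros Hq Hr.
  pose proof (hc n) as Hcn; pose proof (exp_pos (q / r)) as Hexp_qr.
  unfold power_term, log_term.
  destruct (Req_EM_T (u n) 0) as [-> | Hu].
  { rewrite Rabs_R0, rpow_0l, Rmult_0_r, Rabs_R0; nra. }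
  assert (Hau : 0 < Rabs (u n)) by (apply Rabs_pos_lt, Hu).
  rewrite !rpow_Rpower by (try apply exp_pos; exact Hau).
  unfold Rpower; rewrite ln_exp.
  set (w := ln (Rabs (u n))).
  pose proof (exp_pos (q * w)) as Hexp_qw.
  rewrite (Rabs_mult _ (r * w)), (Rabs_mult (c n)), (Rabs_pos_eq (c n)),
    (Rabs_pos_eq (exp (q * w))) by lra.
  destruct (Rle_dec 1 (r * w)) as [Hbig | Hsmall].
  - rewrite (Rabs_pos_eq (r * w)) by lra.
    pose proof (Rmult_le_compat_l (c n * exp (q * w)) _ _ ltac:(nra) Hbig).
    nra.
  - assert (Hexp : exp (q * w) < exp (q / r)).
    { apply exp_increasing; unfold Rdiv.
      apply Rmult_lt_compat_l; [exact Hq|].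
      apply (Rmult_lt_reg_l r); [exact Hr|]; rewrite Rinv_r; lra. }
    pose proof (Rmult_le_compat_l (c n) _ _ Hcn (Rlt_le _ _ Hexp)).
    assert (0 <= c n * exp (q * w) * Rabs (r * w))
      by (apply Rmult_le_pos; [nra | apply Rabs_pos]).
    lra.
Qed.

Lemma Zsummable_power_term (u : Z -> R) : 0 < q -> 0 < r ->
  Zsummable c -> Zsummable (log_term c q r u) -> Zsummable (power_term c q u).
Proof.
  intros Hq Hr Hc Hlog.
  apply (Zsummable_le _ (fun n => Rabs (log_term c q r u n) + exp (q / r) * c n)).
  - apply Zsummable_plus; [apply Zsummable_Rabs, Hlog | apply Zsummable_scal, Hc].
  - intros n; eapply Rle_trans; [apply power_term_le_log_term; assumption | apply Rle_abs].
Qed.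

Lemma normE_rpow (u : Z -> R) : 0 < p -> 0 <= Zsum (norm_term a b p u) ->
  rpow (normE a b p u) p = Zsum (norm_term a b p u).
Proof. intros Hp HN; apply rpow_rpow_inv; assumption. Qed.

Lemma Ifun_eq (u : Z -> R) : 0 < p -> 0 <= Zsum (norm_term a b p u) ->
  Ifun a b c p q r u =
    / p * Zsum (norm_term a b p u) + r / q ^ 2 * Zsum (power_term c q u)
    - / q * Zsum (log_term c q r u).
Proof. intros Hp HN; unfold Ifun; rewrite normE_rpow by assumption; reflexivity. Qed.

Lemma Zsum_norm_term_scale (t : R) (u : Z -> R) : 0 <= t ->
  Zsum (norm_term a b p (scale t u)) = rpow t p * Zsum (norm_term a b p u).
Proof.
  intros Ht; rewrite <- Zsum_scal; apply Zsum_ext; intros n.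
  unfold norm_term, Defs.Delta, scale.
  rewrite <- Rmult_minus_distr_l, !Rabs_mult, (Rabs_pos_eq t) by exact Ht.
  rewrite !rpow_mult_distr by (try exact Ht; apply Rabs_pos).
  ring.
Qed.

Lemma power_term_scale (t : R) (u : Z -> R) (n : Z) : 0 <= t ->
  power_term c q (scale t u) n = rpow t q * power_term c q u n.
Proof.
  intros Ht; unfold power_term, scale.
  rewrite Rabs_mult, (Rabs_pos_eq t), rpow_mult_distr by (try exact Ht; apply Rabs_pos).
  ring.
Qed.

Lemma Zsum_power_term_scale (t : R) (u : Z -> R) : 0 <= t ->
  Zsum (power_term c q (scale t u)) = rpow t q * Zsum (power_term c q u).
Proof.
  intros Ht; rewrite <- Zsum_scal; apply Zsum_ext; intros n; apply power_term_scale, Ht.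
Qed.

Lemma log_term_scale (t : R) (u : Z -> R) (n : Z) : 0 <= t ->
  log_term c q r (scale t u) n =
    rpow t q * (log_term c q r u n + r * ln t * power_term c q u n).
Proof.
  intros [Ht | <-].
  - unfold log_term, power_term, scale.
    destruct (Req_EM_T (u n) 0) as [Hu | Hu].
    { rewrite Hu, Rmult_0_r, Rabs_R0, rpow_0l.
      destruct (Req_EM_T 0 0); [ring | contradiction]. }
    destruct (Req_EM_T (t * u n) 0) as [Htu | _].
    { apply Rmult_integral in Htu; lra. }
    assert (Hau : 0 < Rabs (u n)) by (apply Rabs_pos_lt, Hu).
    rewrite Rabs_mult, (Rabs_pos_eq t), !rpow_mult_distr by (try apply Rabs_pos; lra).
    rewrite !rpow_Rpower by assumption.
    rewrite ln_mult, !ln_Rpower by (unfold Rpower; apply exp_pos).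
    ring.
  - unfold log_term, scale; rewrite rpow_0l, Rmult_0_l.
    destruct (Req_EM_T 0 0); [ring | contradiction].
Qed.

Lemma Zsum_log_term_scale (t : R) (u : Z -> R) : 0 <= t ->
  Zsummable (log_term c q r u) -> Zsummable (power_term c q u) ->
  Zsum (log_term c q r (scale t u)) =
    rpow t q * (Zsum (log_term c q r u) + r * ln t * Zsum (power_term c q u)).
Proof.
  intros Ht Hlog Hpow.
  rewrite (Zsum_ext _ _ (fun n => log_term_scale t u n Ht)), Zsum_scal, Zsum_plus,
    Zsum_scal by (try apply Zsummable_scal; assumption).
  reflexivity.
Qed.

Lemma dI_diag (u : Z -> R) :
  dI a b c p q r u u = Zsum (norm_term a b p u) - Zsum (log_term c q r u).
Proof.
  unfold dI; f_equal; apply Zsum_ext; intros n.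
  - unfold norm_term; rewrite !(Rmult_assoc (_ n)), !rpow_Rabs_minus2; reflexivity.
  - unfold log_term; rewrite (Rmult_assoc (c n)), rpow_Rabs_minus2.
    destruct (Req_EM_T (u n) 0) as [-> | _]; [rewrite Rabs_R0, rpow_0l; ring | reflexivity].
Qed.

End Functional.

Theorem corollary2p3 (p q r : R) (a b c : Z -> R)
  (hp1 : 1 < p) (hpq : p < q)
  (hp2 : exists k : nat, (1 <= k)%nat /\ p / 2 = INR k)
  (hr : 1 <= r)
  (ha : forall n, 0 < a n) (hb : forall n, 0 < b n) (hc : forall n, 0 < c n)
  (C1 : exists b0 : R, 0 < b0 /\ (forall n, b0 <= b n) /\ tends_to_infty_Z b)
  (C2 : exists c0 : R, 0 < c0 /\ (forall n, c n <= c0) /\ Zsummable c)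
  (u : Z -> R) (hu : inD a b c p q r u) (t : R) (ht : 0 <= t) :
  Ifun a b c p q r u >=
    Ifun a b c p q r (scale t u)
    + (1 - rpow t q) / q * dI a b c p q r u u
    + ((1 - rpow t p) / p - (1 - rpow t q) / q) * rpow (normE a b p u) p.
Proof.
  destruct hu as [hE hlog]; destruct C2 as [_ [_ [_ hcsum]]].
  assert (ha0 : forall n, 0 <= a n) by (intros n; left; apply ha).
  assert (hb0 : forall n, 0 <= b n) by (intros n; left; apply hb).
  assert (hc0 : forall n, 0 <= c n) by (intros n; left; apply hc).
  assert (hpow : Zsummable (power_term c q u))
    by (apply Zsummable_power_term with (r := r); auto; lra).
  assert (hN : 0 <= Zsum (norm_term a b p u))
    by (apply Zsum_ge0; [apply norm_term_ge0 | exact hE]; auto).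
  assert (hS : 0 <= Zsum (power_term c q u))
    by (apply Zsum_ge0; [apply power_term_ge0 | exact hpow]; auto).
  assert (hp : 0 < p) by lra.
  assert (hNt : 0 <= Zsum (norm_term a b p (scale t u))).
  { rewrite Zsum_norm_term_scale by auto; apply Rmult_le_pos; [apply rpow_ge0 | exact hN]. }
  rewrite (Ifun_eq a b c p q r (scale t u)), Ifun_eq, normE_rpow, dI_diag by auto.
  rewrite Zsum_norm_term_scale, Zsum_power_term_scale, Zsum_log_term_scale by auto.
  set (S := Zsum (power_term c q u)) in *.
  set (s := rpow t q).
  assert (hgap : 0 <= r / q ^ 2 * (S * (1 - s + q * s * ln t))).
  { apply Rmult_le_pos.
    - apply Rmult_le_pos; [lra | left; apply Rinv_0_lt_compat; nra].
    - apply Rmult_le_pos; [exact hS | apply one_sub_rpow_add_mul_ln_ge0, ht]. }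
  match goal with
  | |- ?lhs >= ?rhs =>
      replace lhs with (rhs + r / q ^ 2 * (S * (1 - s + q * s * ln t))) by (field; lra)
  end.
  lra.
Qed.
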